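(* Let $A$ with projections $\pi_B:A\to B$, $\pi_C:A\to C$ be a pullback in $\mathbf{Sets}$ of $f_1:B\to D$ and $g_1:C\to D$, where $g_1$ is injective. Then $\mathcal{P}^\omega(A)$ with $\mathcal{P}^\omega(\pi_B),\mathcal{P}^\omega(\pi_C)$ is a pullback of $\mathcal{P}^\omega(f_1)$ and $\mathcal{P}^\omega(g_1)$ in $\mathbf{Sets}$.
   Context: For a set $M$ whose elements are treated as atoms, let $\mathcal{P}^0(M)=M$, $\mathcal{P}^{i+1}(M)=\mathcal{P}(\mathcal{P}^i(M))$ and $\mathcal{P}^\omega(M)=\bigcup_{i\in\mathbb{N}_0}\mathcal{P}^i(M)$. For $f:M\to N$, $\mathcal{P}^\omega(f)$ is defined recursively by $\mathcal{P}^\omega(f)(x)=f(x)$ for $x\in M$ and $\mathcal{P}^\omega(f)(x)=\{\mathcal{P}^\omega(f)(x')\mid x'\in x\}$ otherwise; this makes $\mathcal{P}^\omega$ a functor $\mathbf{Sets}\to\mathbf{Sets}$. *)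

(* The iterated powerset P^omega(M) with atoms, modelled as a
   quotient of the disjoint union of the levels P^i(M) by set-theoretic
   identity of the underlying (hereditary) sets. *)
From Stdlib Require Import ClassicalEpsilon.

Fixpoint Pn (M : Type) (n : nat) : Type :=
  match n with
  | 0 => M
  | S k => Pn M k -> Prop
  end.

Fixpoint Peq (M : Type) (i : nat) : forall j : nat, Pn M i -> Pn M j -> Prop :=
  match i as i0 return forall j : nat, Pn M i0 -> Pn M j -> Prop with
  | 0 => fun j => match j as j0 return M -> Pn M j0 -> Prop with
                  | 0 => fun x y => x = y
                  | S _ => fun _ _ => False
                  end
  | S i' => fun j => match j as j0 return (Pn M i' -> Prop) -> Pn M j0 -> Prop with
                     | 0 => fun _ _ => False
                     | S j' => fun x y =>
                         (forall a, x a -> exists b, y b /\ Peq M i' j' a b) /\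
                         (forall b, y b -> exists a, x a /\ Peq M i' j' a b)
                     end
  end.

Definition Pelt (M : Type) : Type := { n : nat & Pn M n }.

Definition PeltEq (M : Type) (z w : Pelt M) : Prop :=
  Peq M (projT1 z) (projT1 w) (projT2 z) (projT2 w).

Definition Pw (M : Type) : Type :=
  { Cl : Pelt M -> Prop | exists z, forall w, Cl w <-> PeltEq M z w }.

Definition Pw_class (M : Type) (z : Pelt M) : Pw M :=
  exist (fun Cl : Pelt M -> Prop => exists z0, forall w, Cl w <-> PeltEq M z0 w)
        (fun w => PeltEq M z w)
        (ex_intro _ z (fun w => conj (fun h => h) (fun h => h))).

Definition Pw_repr (M : Type) (x : Pw M) : Pelt M :=
  proj1_sig (constructive_indefinite_description _ (proj2_sig x)).

Fixpoint Pnmap (M N : Type) (f : M -> N) (n : nat) : Pn M n -> Pn N n :=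
  match n as n0 return Pn M n0 -> Pn N n0 with
  | 0 => f
  | S k => fun x y => exists a, x a /\ Pnmap M N f k a = y
  end.

Definition Peltmap (M N : Type) (f : M -> N) (z : Pelt M) : Pelt N :=
  existT (Pn N) (projT1 z) (Pnmap M N f (projT1 z) (projT2 z)).

(* P^omega(f) : P^omega(M) -> P^omega(N), computed on a representative
   (the result does not depend on the choice). *)
Definition Pwmap (M N : Type) (f : M -> N) (x : Pw M) : Pw N :=
  Pw_class N (Peltmap M N f (Pw_repr M x)).

Definition is_pullback {A B C D : Type}
  (pB : A -> B) (pC : A -> C) (f : B -> D) (g : C -> D) : Prop :=
  (forall a, f (pB a) = g (pC a)) /\
  (forall (b : B) (c : C), f b = g c -> exists! a : A, pB a = b /\ pC a = c).

(* Commutativity of the square is functoriality of P^omega.  Since g1 is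
   injective, so is its pullback pB, and P^omega preserves injectivity; this
   gives uniqueness of the mediating element.  For existence, given sets x over
   B and y over C with the same image in D, the set of those a whose images
   under pB and pC are (hereditarily) elements of x and y respectively is
   mapped onto x and y; this is built level by level, lifting pairs of
   elements with a common image recursively. *)
From Stdlib Require Import ClassicalEpsilon ProofIrrelevance FunctionalExtensionality PropExtensionality.

Section Peq_equivalence.
Variable M : Type.

Lemma Peq_refl (i : nat) (x : Pn M i) : Peq M i i x x.
Proof.
  induction i; simpl; [reflexivity|].
  split; intros a Ha; exists a; auto.
Qed.

Lemma Peq_sym : forall i j (x : Pn M i) (y : Pn M j), Peq M i j x y -> Peq M j i y x.
Proof.
  induction i; destruct j; simpl; intros x y H; try contradiction; auto.
  destruct H as [H1 H2]; split; intros b Hb.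
  - destruct (H2 b Hb) as [a [Ha Hab]]; exists a; auto.
  - destruct (H1 b Hb) as [a [Ha Hab]]; exists a; auto.
Qed.

Lemma Peq_trans : forall i j k (x : Pn M i) (y : Pn M j) (z : Pn M k),
  Peq M i j x y -> Peq M j k y z -> Peq M i k x z.
Proof.
  induction i; destruct j, k; simpl; intros x y z H H'; try contradiction.
  - congruence.
  - destruct H as [H1 H2], H' as [H1' H2']; split.
    + intros a Ha. destruct (H1 a Ha) as [b [Hb Hab]].
      destruct (H1' b Hb) as [c [Hc Hbc]]. exists c; eauto.
    + intros c Hc. destruct (H2' c Hc) as [b [Hb Hbc]].
      destruct (H2 b Hb) as [a [Ha Hab]]. exists a; eauto.
Qed.
End Peq_equivalence.

Section Pnmap_properties.
Variables (M N : Type) (f : M -> N).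

Lemma Pnmap_Peq : forall i j x y,
  Peq M i j x y -> Peq N i j (Pnmap M N f i x) (Pnmap M N f j y).
Proof.
  induction i; destruct j; simpl; intros x y H; try contradiction.
  - congruence.
  - destruct H as [H1 H2]; split.
    + intros u [a [Ha <-]]. destruct (H1 a Ha) as [b [Hb Hab]].
      exists (Pnmap M N f j b); split; [exists b; auto | auto].
    + intros u [b [Hb <-]]. destruct (H2 b Hb) as [a [Ha Hab]].
      exists (Pnmap M N f i a); split; [exists a; auto | auto].
Qed.

Lemma Pnmap_reflect_Peq : (forall a b, f a = f b -> a = b) ->
  forall i j x y, Peq N i j (Pnmap M N f i x) (Pnmap M N f j y) -> Peq M i j x y.
Proof.
  intros f_inj.
  induction i; destruct j; simpl; intros x y H; try contradiction.
  - auto.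
  - destruct H as [H1 H2]; split.
    + intros a Ha.
      destruct (H1 _ (ex_intro _ a (conj Ha eq_refl))) as [d [[b [Hb <-]] Hd]].
      exists b; auto.
    + intros b Hb.
      destruct (H2 _ (ex_intro _ b (conj Hb eq_refl))) as [d [[a [Ha <-]] Hd]].
      exists a; auto.
Qed.

Lemma Pnmap_comp (L : Type) (g : N -> L) : forall n (x : Pn M n),
  Pnmap N L g n (Pnmap M N f n x) = Pnmap M L (fun a => g (f a)) n x.
Proof.
  induction n as [|n IH]; simpl; intros x; [reflexivity|].
  apply functional_extensionality; intros y.
  apply propositional_extensionality; split.
  - intros [u [[a [Ha <-]] <-]]. exists a; rewrite IH; auto.
  - intros [a [Ha <-]]. exists (Pnmap M N f n a); rewrite IH; eauto.
Qed.
End Pnmap_properties.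

Section Pw_quotient.
Variable M : Type.

Lemma Pw_eq (X Y : Pw M) : proj1_sig X = proj1_sig Y -> X = Y.
Proof.
  destruct X, Y; simpl; intros; subst; f_equal; apply proof_irrelevance.
Qed.

Lemma Pw_class_eq_iff (z w : Pelt M) : Pw_class M z = Pw_class M w <-> PeltEq M z w.
Proof.
  unfold PeltEq; split; intros H.
  - apply (f_equal (@proj1_sig _ _)) in H; simpl in H.
    pose proof (equal_f H w) as E; cbv beta in E.
    unfold PeltEq in E; rewrite E. apply Peq_refl.
  - apply Pw_eq; simpl. apply functional_extensionality; intros u.
    apply propositional_extensionality; split; intros H'.
    + eapply Peq_trans; [apply Peq_sym; exact H | exact H'].
    + eapply Peq_trans; [exact H | exact H'].
Qed.

Lemma Pw_class_repr (X : Pw M) : Pw_class M (Pw_repr M X) = X.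
Proof.
  destruct X as [Cl Hx]. unfold Pw_repr; cbn [proj2_sig].
  pose proof (proj2_sig (constructive_indefinite_description _ Hx)) as Hz.
  apply Pw_eq; simpl. apply functional_extensionality; intros u.
  apply propositional_extensionality; symmetry; apply Hz.
Qed.

Lemma Pw_class_surj (X : Pw M) : exists n (x : Pn M n), X = Pw_class M (existT _ n x).
Proof.
  exists (projT1 (Pw_repr M X)), (projT2 (Pw_repr M X)).
  rewrite <- sigT_eta. symmetry; apply Pw_class_repr.
Qed.
End Pw_quotient.

Lemma Pwmap_class (M N : Type) (f : M -> N) n (x : Pn M n) :
  Pwmap M N f (Pw_class M (existT _ n x)) = Pw_class N (existT _ n (Pnmap M N f n x)).
Proof.
  unfold Pwmap, Peltmap. apply Pw_class_eq_iff.
  pose proof (Pw_class_repr M (Pw_class M (existT _ n x))) as H.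
  apply Pw_class_eq_iff, (Pnmap_Peq M N f) in H. exact H.
Qed.

Lemma Pwmap_comp (M N L : Type) (f : M -> N) (g : N -> L) (X : Pw M) :
  Pwmap N L g (Pwmap M N f X) = Pwmap M L (fun a => g (f a)) X.
Proof.
  destruct (Pw_class_surj M X) as [n [x ->]].
  rewrite !Pwmap_class, Pnmap_comp. reflexivity.
Qed.

Lemma Pwmap_inj (M N : Type) (f : M -> N) :
  (forall a b, f a = f b -> a = b) ->
  forall X Y, Pwmap M N f X = Pwmap M N f Y -> X = Y.
Proof.
  intros f_inj X Y.
  destruct (Pw_class_surj M X) as [n [x ->]], (Pw_class_surj M Y) as [m [y ->]].
  rewrite !Pwmap_class, !Pw_class_eq_iff.
  apply Pnmap_reflect_Peq, f_inj.
Qed.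

Lemma pullback_inj_l {A B C D : Type} (pB : A -> B) (pC : A -> C)
  (f1 : B -> D) (g1 : C -> D) :
  is_pullback pB pC f1 g1 -> (forall c c', g1 c = g1 c' -> c = c') ->
  forall a a', pB a = pB a' -> a = a'.
Proof.
  intros [Hcomm Hpb] g1_inj a a' EB.
  assert (EC : pC a = pC a').
  { apply g1_inj. rewrite <- !Hcomm, EB. reflexivity. }
  destruct (Hpb (pB a) (pC a) (Hcomm a)) as [z [_ Hz]].
  transitivity z; [symmetry|]; apply Hz; auto.
Qed.

Section pullback_lift.
Variables (A B C D : Type) (pB : A -> B) (pC : A -> C) (f1 : B -> D) (g1 : C -> D).
Hypothesis lift : forall b c, f1 b = g1 c -> exists a, pB a = b /\ pC a = c.

Lemma Pnmap_pullback_lift : forall n (x : Pn B n) m (y : Pn C m),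
  Peq D n m (Pnmap B D f1 n x) (Pnmap C D g1 m y) ->
  exists z, Peq B n n (Pnmap A B pB n z) x /\ Peq C n m (Pnmap A C pC n z) y.
Proof.
  induction n as [|n IH]; destruct m as [|m]; simpl; intros y H; try contradiction.
  - destruct (lift _ _ H) as [a [H1 H2]]; exists a; auto.
  - destruct H as [H1 H2].
    exists (fun a => (exists b, x b /\ Peq B n n (Pnmap A B pB n a) b) /\
                     (exists c, y c /\ Peq C n m (Pnmap A C pC n a) c)).
    split; split.
    + intros u [a [[[b [Hb Hab]] _] <-]]. exists b; auto.
    + intros b Hb.
      destruct (H1 _ (ex_intro _ b (conj Hb eq_refl))) as [d [[c [Hc <-]] Hbd]].
      destruct (IH b m c Hbd) as [z [Hz1 Hz2]].
      exists (Pnmap A B pB n z); split; [exists z; split; [split; eauto | auto] | exact Hz1].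
    + intros u [a [[_ [c [Hc Hac]]] <-]]. exists c; auto.
    + intros c Hc.
      destruct (H2 _ (ex_intro _ c (conj Hc eq_refl))) as [d [[b [Hb <-]] Hbd]].
      destruct (IH b m c Hbd) as [z [Hz1 Hz2]].
      exists (Pnmap A C pC n z); split; [exists z; split; [split; eauto | auto] | exact Hz2].
Qed.

Lemma Pwmap_pullback_lift (X : Pw B) (Y : Pw C) :
  Pwmap B D f1 X = Pwmap C D g1 Y ->
  exists Z, Pwmap A B pB Z = X /\ Pwmap A C pC Z = Y.
Proof.
  destruct (Pw_class_surj B X) as [n [x ->]], (Pw_class_surj C Y) as [m [y ->]].
  rewrite !Pwmap_class, Pw_class_eq_iff. intros H.
  destruct (Pnmap_pullback_lift n x m y H) as [z [Hz1 Hz2]].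
  exists (Pw_class A (existT _ n z)).
  rewrite !Pwmap_class, !Pw_class_eq_iff. auto.
Qed.
End pullback_lift.

Theorem mainTheorem8 (A B C D : Type) (pB : A -> B) (pC : A -> C)
  (f1 : B -> D) (g1 : C -> D) :
  is_pullback pB pC f1 g1 ->
  (forall c c' : C, g1 c = g1 c' -> c = c') ->
  is_pullback (Pwmap A B pB) (Pwmap A C pC) (Pwmap B D f1) (Pwmap C D g1).
Proof.
  intros Hpb g1_inj.
  pose proof (pullback_inj_l pB pC f1 g1 Hpb g1_inj) as pB_inj.
  destruct Hpb as [Hcomm Hpb].
  assert (lift : forall b c, f1 b = g1 c -> exists a, pB a = b /\ pC a = c).
  { intros b c E. destruct (Hpb b c E) as [a [Ha _]]; eauto. }
  split.
  - intros X. rewrite !Pwmap_comp.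
    replace (fun a => f1 (pB a)) with (fun a => g1 (pC a))
      by (apply functional_extensionality; auto).
    reflexivity.
  - intros X Y H.
    destruct (Pwmap_pullback_lift A B C D pB pC f1 g1 lift X Y H) as [Z HZ].
    exists Z; split; auto.
    intros Z' [E _]. apply (Pwmap_inj A B pB pB_inj). rewrite E. apply HZ.
Qed.
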